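(* Let $P\in(0,1)$ and $h(x)=P^{1/(1+x)}$ for $x\ge0$. Then $h$ is increasing on $[0,\infty)$ and $$h''(x)\ge-\frac{(\sqrt3-3)^4\,e^{\sqrt3-3}}{\sqrt3\,(\ln P)^2}\qquad\text{for all }x\ge0.$$ Consequently, for $K\ge1$, $\mu_1,\dots,\mu_K>0$ and $P_1,\dots,P_K\in(0,1)$, the function $f(\boldsymbol x)=\sum_{k=1}^K\mu_kP_k^{1/(1+x_k)}$ on $\mathbb{R}_+^K$ satisfies, for every $\boldsymbol x_0\in\mathbb{R}_+^K$, $f(\boldsymbol x)\ge\zeta(\boldsymbol x|\boldsymbol x_0)$ for all $\boldsymbol x\in\mathbb{R}_+^K$ with equality at $\boldsymbol x=\boldsymbol x_0$, where $$\zeta(\boldsymbol x|\boldsymbol x_0)=\sum_{k=1}^K\mu_k\Big(P_k^{1/(1+x_{0,k})}-\frac{P_k^{1/(1+x_{0,k})}\ln P_k}{(1+x_{0,k})^2}(x_k-x_{0,k})-\frac{(\sqrt3-3)^4e^{\sqrt3-3}}{2\sqrt3(\ln P_k)^2}(x_k-x_{0,k})^2\Big),$$ which is a concave function of $\boldsymbol x$.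
   Context: $\mathbb{R}_+=[0,\infty)$; $P_k$ plays the role of the false-alarm probability on subcarrier $k$ and $P_k^{1/(1+x_k)}$ is the detection probability at SINR $x_k$. *)

From Stdlib Require Import Reals Lra.
From Coquelicot Require Import Coquelicot.
Open Scope R_scope.

Definition hdet (P x : R) : R := Rpower P (/ (1 + x)).

Definition ccurv : R := (sqrt 3 - 3) ^ 4 * exp (sqrt 3 - 3) / sqrt 3.

(* finite sum over k = 0 .. K-1 (K >= 1 is assumed where used) *)
Definition sumK (K : nat) (g : nat -> R) : R := sum_n g (pred K).

(* f(x) = sum_k mu_k P_k^(1/(1+x_k)) ; vectors in R^K are nat -> R, only indices < K matter *)
Definition fobj (K : nat) (mu P x : nat -> R) : R :=
  sumK K (fun k => mu k * hdet (P k) (x k)).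

Definition zeta (K : nat) (mu P x0 x : nat -> R) : R :=
  sumK K (fun k => mu k *
    (hdet (P k) (x0 k)
     - hdet (P k) (x0 k) * ln (P k) / (1 + x0 k) ^ 2 * (x k - x0 k)
     - ccurv / (2 * (ln (P k)) ^ 2) * (x k - x0 k) ^ 2)).

Definition nonnegK (K : nat) (x : nat -> R) : Prop := forall k, (k < K)%nat -> 0 <= x k.

From Stdlib Require Import Reals Lra Psatz.
From Coquelicot Require Import Coquelicot.
Open Scope R_scope.

(* Write L = ln P < 0, so that h(x) = P^(1/(1+x)) = exp(L/(1+x)).
   Monotonicity of h follows from that of exp.  Differentiating twice,
     h'(x) = -L/(1+x)^2 h(x)   and   h''(x) = g(L/(1+x)) / L^2,
   where g(s) = e^s (s^4 + 2 s^3).  As g'(s) = e^s s^2 (s^2 + 6 s + 6), the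
   function g attains its global minimum at s = sqrt 3 - 3, where its value
   is -ccurv; hence h'' >= -ccurv / L^2.
   A function whose second derivative is bounded below by -M on a half-line
   lies above its tangent parabola of curvature -M (two applications of the
   mean value theorem); applied summand by summand this gives f >= zeta, with
   equality at x0 by construction.  Finally zeta is separable and each of its
   summands is a quadratic with nonpositive leading coefficient, so zeta is
   concave. *)

Lemma sum_n_le (u v : nat -> R) (n : nat) :
  (forall k, (k <= n)%nat -> u k <= v k) -> sum_n u n <= sum_n v n.
Proof. rewrite !sum_n_Reals. apply sum_Rle. Qed.

Lemma sum_n_lincomb (u v : nat -> R) (a b : R) (n : nat) :
  sum_n (fun k => a * u k + b * v k) n = a * sum_n u n + b * sum_n v n.
Proof.
  exact (eq_trans (sum_n_plus (fun k => mult a (u k)) (fun k => mult b (v k)) n)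
                  (f_equal2 plus (sum_n_mult_l a u n) (sum_n_mult_l b v n))).
Qed.

Lemma le_of_derive_nonneg (f df : R -> R) (a b : R) :
  a <= b ->
  (forall z, a <= z <= b -> is_derive f z (df z)) ->
  (forall z, a <= z <= b -> 0 <= df z) -> f a <= f b.
Proof.
  intros Hab Hder Hpos.
  destruct (MVT_gen f a b df) as [c [Hc Hmvt]];
    rewrite ?Rmin_left, ?Rmax_right in * by lra.
  - intros z Hz. apply Hder; lra.
  - intros z Hz. apply continuity_pt_filterlim.
    apply (@ex_derive_continuous R_AbsRing R_NormedModule).
    eexists. apply Hder; lra.
  - assert (0 <= df c * (b - a)) by (apply Rmult_le_pos; [apply Hpos|]; lra).
    lra.
Qed.

Lemma ge_of_derive_nonpos (f df : R -> R) (a b : R) :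
  a <= b ->
  (forall z, a <= z <= b -> is_derive f z (df z)) ->
  (forall z, a <= z <= b -> df z <= 0) -> f b <= f a.
Proof.
  intros Hab Hder Hneg.
  enough (- f a <= - f b) by lra.
  apply (le_of_derive_nonneg (fun z => - f z) (fun z => - df z)); [lra| |].
  - intros z Hz. apply (is_derive_opp f). apply Hder; lra.
  - intros z Hz. specialize (Hneg z Hz). lra.
Qed.

Section TangentParabola.
Variables (f df d2f : R -> R) (a M : R).
Hypothesis f_derive : forall z, a < z -> is_derive f z (df z).
Hypothesis df_derive : forall z, a < z -> is_derive df z (d2f z).
Hypothesis d2f_lower : forall z, a < z -> - M <= d2f z.

(* The derivative gap f'(z) - f'(x0) + M (z - x0) is nondecreasing, vanishes at
   x0, and therefore has the sign of z - x0. *)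
Lemma derivative_gap_sign (x0 z : R) : a < x0 -> a < z ->
  (x0 <= z -> 0 <= df z - df x0 + M * (z - x0)) /\
  (z <= x0 -> df z - df x0 + M * (z - x0) <= 0).
Proof.
  intros Hx0 Hz.
  set (gap := fun y => df y - df x0 + M * (y - x0)).
  assert (gap_derive : forall y, a < y -> is_derive gap y (d2f y + M)).
  { intros y Hy. unfold gap. auto_derive; [eexists; apply df_derive, Hy|].
    erewrite is_derive_unique by apply df_derive, Hy. ring. }
  assert (gap_x0 : gap x0 = 0) by (unfold gap; ring).
  assert (gap_incr : forall u v, a < u -> u <= v -> gap u <= gap v).
  { intros u v Hu Huv. apply (le_of_derive_nonneg gap (fun y => d2f y + M)); [lra| |].
    - intros y Hy. apply gap_derive. lra.
    - intros y Hy. specialize (d2f_lower y ltac:(lra)). lra. }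
  split; intros Hle; fold (gap z); rewrite <- gap_x0; apply gap_incr; lra.
Qed.

Lemma tangent_parabola_minorant (x0 x : R) : a < x0 -> a < x ->
  f x0 + df x0 * (x - x0) - M / 2 * (x - x0) ^ 2 <= f x.
Proof.
  intros Hx0 Hx.
  set (excess := fun z => f z - f x0 - df x0 * (z - x0) + M / 2 * (z - x0) ^ 2).
  assert (excess_derive : forall z, a < z ->
            is_derive excess z (df z - df x0 + M * (z - x0))).
  { intros z Hz. unfold excess. auto_derive; [eexists; apply f_derive, Hz|].
    erewrite is_derive_unique by apply f_derive, Hz. field. }
  enough (excess x0 <= excess x) by (unfold excess in *; lra).
  set (gap := fun z => df z - df x0 + M * (z - x0)).
  destruct (Rle_lt_dec x0 x) as [Hle | Hlt].
  - apply (le_of_derive_nonneg excess gap x0 x Hle).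
    + intros z Hz. apply excess_derive. lra.
    + intros z Hz. apply (derivative_gap_sign x0 z); lra.
  - apply (ge_of_derive_nonpos excess gap x x0); [lra| |].
    + intros z Hz. apply excess_derive. lra.
    + intros z Hz. apply (derivative_gap_sign x0 z); lra.
Qed.

End TangentParabola.

(* The curvature profile g(s) = e^s (s^4 + 2 s^3): h''(x) = g(L/(1+x)) / L^2. *)
Definition curv_profile (s : R) : R := exp s * (s ^ 4 + 2 * s ^ 3).

Definition curv_profile_deriv (s : R) : R := exp s * (s ^ 2 * (s ^ 2 + 6 * s + 6)).

Lemma curv_profile_derive (s : R) : is_derive curv_profile s (curv_profile_deriv s).
Proof. unfold curv_profile, curv_profile_deriv. auto_derive; [auto|]. ring. Qed.

Lemma sqrt3_bounds : sqrt 3 * sqrt 3 = 3 /\ 1 < sqrt 3 < 2.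
Proof.
  split; [apply sqrt_sqrt; lra|].
  rewrite <- sqrt_1, <- (sqrt_square 2) by lra.
  split; apply sqrt_lt_1; lra.
Qed.

(* At the critical point s* = sqrt 3 - 3 one has sqrt 3 (s* + 2) = - s*, so
   g(s* ) = s*^3 (s* + 2) e^s* = - ccurv. *)
Lemma curv_profile_at_min : curv_profile (sqrt 3 - 3) = - ccurv.
Proof.
  destruct sqrt3_bounds as [Hsq [H1 H2]].
  assert (Hcrit : sqrt 3 * ((sqrt 3 - 3) + 2) = - (sqrt 3 - 3)) by nra.
  unfold curv_profile, ccurv.
  replace ((sqrt 3 - 3) ^ 4 + 2 * (sqrt 3 - 3) ^ 3)
    with ((sqrt 3 - 3) ^ 3 * (sqrt 3 * ((sqrt 3 - 3) + 2)) / sqrt 3) by (field; lra).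
  rewrite Hcrit. field. lra.
Qed.

Lemma ccurv_pos : 0 < ccurv.
Proof.
  destruct sqrt3_bounds as [_ [H1 H2]].
  unfold ccurv. apply Rdiv_lt_0_compat; [|lra].
  apply Rmult_lt_0_compat; [|apply exp_pos].
  replace ((sqrt 3 - 3) ^ 4) with ((3 - sqrt 3) ^ 4) by ring.
  apply pow_lt. lra.
Qed.

(* g is nonnegative on (-oo, -2], decreasing on [-2, s*] and increasing on
   [s*, +oo), so - ccurv is its global minimum. *)
Lemma curv_profile_min (s : R) : - ccurv <= curv_profile s.
Proof.
  destruct sqrt3_bounds as [Hsq [H1 H2]].
  assert (factor_sign : forall z, z ^ 2 + 6 * z + 6 = (z - (sqrt 3 - 3)) * (z + sqrt 3 + 3))
    by (intros z; nra).
  destruct (Rle_lt_dec s (-2)) as [Hs | Hs]; [|destruct (Rle_lt_dec s (sqrt 3 - 3)) as [Hs' | Hs']].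
  - pose proof ccurv_pos.
    enough (0 <= curv_profile s) by lra.
    unfold curv_profile. apply Rmult_le_pos; [left; apply exp_pos|].
    replace (s ^ 4 + 2 * s ^ 3) with ((s * s) * (s * (s + 2))) by ring. nra.
  - rewrite <- curv_profile_at_min.
    apply (ge_of_derive_nonpos curv_profile curv_profile_deriv s (sqrt 3 - 3) Hs');
      [intros; apply curv_profile_derive|].
    intros z Hz. unfold curv_profile_deriv. rewrite factor_sign.
    assert (0 <= exp z * (z ^ 2 * ((sqrt 3 - 3 - z) * (z + sqrt 3 + 3))))
      by (apply Rmult_le_pos; [left; apply exp_pos|]; apply Rmult_le_pos; nra).
    lra.
  - rewrite <- curv_profile_at_min.
    apply (le_of_derive_nonneg curv_profile curv_profile_deriv (sqrt 3 - 3) s);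
      [lra | intros; apply curv_profile_derive |].
    intros z Hz. unfold curv_profile_deriv. rewrite factor_sign.
    apply Rmult_le_pos; [left; apply exp_pos|]. apply Rmult_le_pos; nra.
Qed.

Lemma ln_neg (P : R) : 0 < P < 1 -> ln P < 0.
Proof. intros HP. rewrite <- ln_1. apply ln_increasing; lra. Qed.

Definition dhdet (P x : R) : R := - ln P / (1 + x) ^ 2 * hdet P x.
Definition d2hdet (P x : R) : R := curv_profile (ln P / (1 + x)) / (ln P) ^ 2.

Lemma hdet_derive (P x : R) : -1 < x -> is_derive (hdet P) x (dhdet P x).
Proof. intros Hx. unfold dhdet, hdet, Rpower. auto_derive; [lra|]. field. lra. Qed.

Lemma dhdet_derive (P x : R) : 0 < P < 1 -> -1 < x -> is_derive (dhdet P) x (d2hdet P x).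
Proof.
  intros HP Hx. pose proof (ln_neg P HP).
  unfold dhdet, d2hdet, hdet, Rpower, curv_profile.
  auto_derive; [repeat split; nra|].
  replace (ln P / (1 + x)) with (/ (1 + x) * ln P) by (field; lra).
  field. split; lra.
Qed.

Lemma d2hdet_lower (P x : R) : 0 < P < 1 -> - ccurv / (ln P) ^ 2 <= d2hdet P x.
Proof.
  intros HP. pose proof (ln_neg P HP).
  unfold d2hdet, Rdiv. apply Rmult_le_compat_r; [|apply curv_profile_min].
  left. apply Rinv_0_lt_compat. nra.
Qed.

(* Derive_n (hdet P) 2 agrees with d2hdet P, since dhdet P is the derivative
   of hdet P on a neighbourhood of x. *)
Lemma hdet_second_derivative (P x : R) : 0 < P < 1 -> -1 < x ->
  ex_derive_n (hdet P) 2 x /\ Derive_n (hdet P) 2 x = d2hdet P x.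
Proof.
  intros HP Hx.
  assert (Hloc : locally x (fun t => dhdet P t = Derive (hdet P) t)).
  { assert (Hrad : 0 < 1 + x) by lra.
    exists (mkposreal _ Hrad). intros t Ht.
    apply Rabs_def2 in Ht. unfold minus, plus, opp in Ht. simpl in Ht.
    symmetry. apply is_derive_unique, hdet_derive. lra. }
  split; simpl.
  - apply (ex_derive_ext_loc (dhdet P) _ x Hloc). eexists. apply dhdet_derive; lra.
  - rewrite <- (Derive_ext_loc (dhdet P)); [|exact Hloc].
    apply is_derive_unique, dhdet_derive; lra.
Qed.

(* h(x) = exp(ln P / (1 + x)) is increasing since ln P < 0. *)
Lemma hdet_increasing (P x y : R) : 0 < P < 1 -> -1 < x -> x < y -> hdet P x < hdet P y.
Proof.
  intros HP Hx Hxy. pose proof (ln_neg P HP).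
  unfold hdet, Rpower. apply exp_increasing.
  assert (/ (1 + y) < / (1 + x)) by (apply Rinv_lt_contravar; nra).
  nra.
Qed.

(* One summand of zeta: the tangent parabola of h at x0 with curvature
   - ccurv / (ln P)^2. *)
Definition zeta_term (P x0 x : R) : R :=
  hdet P x0 - hdet P x0 * ln P / (1 + x0) ^ 2 * (x - x0)
  - ccurv / (2 * (ln P) ^ 2) * (x - x0) ^ 2.

Lemma zeta_term_at_center (P x0 : R) : zeta_term P x0 x0 = hdet P x0.
Proof. unfold zeta_term. ring. Qed.

(* Each summand of zeta is a minorant of h, by the tangent-parabola lemma
   applied with the curvature bound on (-1, +oo). *)
Lemma zeta_term_minorant (P x0 x : R) : 0 < P < 1 -> -1 < x0 -> -1 < x ->
  zeta_term P x0 x <= hdet P x.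
Proof.
  intros HP Hx0 Hx. pose proof (ln_neg P HP).
  assert (curv_bound : forall z, -1 < z -> - (ccurv / (ln P) ^ 2) <= d2hdet P z).
  { intros z _. rewrite <- Rdiv_opp_l. apply d2hdet_lower, HP. }
  assert (Hparab := tangent_parabola_minorant (hdet P) (dhdet P) (d2hdet P) (-1)
                      (ccurv / (ln P) ^ 2) (hdet_derive P) (fun z => dhdet_derive P z HP)
                      curv_bound x0 x Hx0 Hx).
  eapply Rle_trans; [|exact Hparab].
  right. unfold zeta_term, dhdet. field. split; [nra|lra].
Qed.

Lemma concave_quadratic (A B C z0 u v t : R) : 0 <= C -> 0 <= t <= 1 ->
  t * (A - B * (u - z0) - C * (u - z0) ^ 2) + (1 - t) * (A - B * (v - z0) - C * (v - z0) ^ 2)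
  <= A - B * (t * u + (1 - t) * v - z0) - C * (t * u + (1 - t) * v - z0) ^ 2.
Proof.
  intros HC Ht.
  assert (0 <= C * (t * (1 - t)) * (u - v) ^ 2)
    by (apply Rmult_le_pos; [apply Rmult_le_pos|apply pow2_ge_0]; nra).
  nra.
Qed.

Lemma zeta_term_concave (P x0 u v t : R) : 0 < P < 1 -> 0 <= t <= 1 ->
  t * zeta_term P x0 u + (1 - t) * zeta_term P x0 v <= zeta_term P x0 (t * u + (1 - t) * v).
Proof.
  intros HP Ht. pose proof (ln_neg P HP). pose proof ccurv_pos.
  unfold zeta_term. apply concave_quadratic; [|exact Ht].
  unfold Rdiv. apply Rmult_le_pos; [lra|]. left. apply Rinv_0_lt_compat. nra.
Qed.

Theorem mainTheorem7 :
  (forall P : R, 0 < P < 1 ->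
     (forall x y : R, 0 <= x -> x < y -> hdet P x < hdet P y) /\
     (forall x : R, 0 <= x ->
        ex_derive_n (hdet P) 2 x /\
        Derive_n (hdet P) 2 x >= - ccurv / (ln P) ^ 2)) /\
  (forall (K : nat) (mu P x0 : nat -> R),
     (1 <= K)%nat ->
     (forall k, (k < K)%nat -> 0 < mu k /\ 0 < P k < 1) ->
     nonnegK K x0 ->
     (forall x, nonnegK K x -> fobj K mu P x >= zeta K mu P x0 x) /\
     fobj K mu P x0 = zeta K mu P x0 x0 /\
     (forall (x y : nat -> R) (t : R), nonnegK K x -> nonnegK K y -> 0 <= t <= 1 ->
        zeta K mu P x0 (fun k => t * x k + (1 - t) * y k)
        >= t * zeta K mu P x0 x + (1 - t) * zeta K mu P x0 y)).
Proof.
  split.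
  - intros P HP. split; [intros x y Hx Hxy; apply hdet_increasing; auto; lra|].
    intros x Hx. destruct (hdet_second_derivative P x HP ltac:(lra)) as [Hex ->].
    split; [exact Hex|]. apply Rle_ge, d2hdet_lower, HP.
  - intros K mu P x0 HK Hpar Hx0.
    assert (Hidx : forall k, (k <= pred K)%nat -> 0 < mu k /\ 0 < P k < 1 /\ 0 <= x0 k).
    { intros k Hk. destruct (Hpar k ltac:(lia)) as [Hmu HP].
      repeat split; try apply HP; [exact Hmu | apply Hx0; lia]. }
    change (zeta K mu P x0) with
      (fun x => sumK K (fun k => mu k * zeta_term (P k) (x0 k) (x k))).
    unfold fobj, sumK. cbv beta. split; [|split].
    + intros x Hx. apply Rle_ge, sum_n_le. intros k Hk.
      destruct (Hidx k Hk) as [Hmu [HP Hx0k]].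
      apply Rmult_le_compat_l; [lra|].
      apply zeta_term_minorant; [exact HP|lra|]. specialize (Hx k ltac:(lia)). lra.
    + apply sum_n_ext. intros k. rewrite zeta_term_at_center. reflexivity.
    + intros x y t _ _ Ht. rewrite <- sum_n_lincomb. apply Rle_ge, sum_n_le.
      intros k Hk. destruct (Hidx k Hk) as [Hmu [HP _]].
      pose proof (zeta_term_concave (P k) (x0 k) (x k) (y k) t HP Ht). nra.
Qed.
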